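(* Let $\mathcal A$ be an algebra over $k$, $\boldsymbol\sigma\in\mathrm{Aut}^n_{\mathrm{cfo}}(\mathcal A)$ and $\boldsymbol m\in\mathbb Z^n_{>0}$ with $\boldsymbol\sigma^{\boldsymbol m}=\mathbf{id}$. Then $M_{\boldsymbol m}(\mathcal A,\boldsymbol\sigma)$ and $M_{\mathrm{ord}(\boldsymbol\sigma)}(\mathcal A,\boldsymbol\sigma)$ are support-isomorphic.
   Context: $k$ is an algebraically closed field of characteristic $0$; primitive roots of unity $\zeta_n$ are fixed with $\zeta_{mn}^m=\zeta_n$. Algebras need not be associative or unital. $\mathrm{Aut}^n_{\mathrm{cfo}}(\mathcal A)$ is the set of $n$-tuples $\boldsymbol\sigma=(\sigma_1,\dots,\sigma_n)$ of pairwise commuting finite-order automorphisms; $\boldsymbol\sigma^{\boldsymbol m}=\mathbf{id}$ means $\sigma_i^{m_i}=\mathrm{id}$ for all $i$; $\mathrm{ord}(\boldsymbol\sigma)=(\mathrm{ord}(\sigma_1),\dots,\mathrm{ord}(\sigma_n))$. For $\lambda=(l_1,\dots,l_n)\in\mathbb Z^n$, $\mathcal A^{\bar\lambda}=\{u:\sigma_i(u)=\zeta_{m_i}^{l_i}u\ \forall i\}$ and $M_{\boldsymbol m}(\mathcal A,\boldsymbol\sigma)=\bigoplus_{\lambda}\mathcal A^{\bar\lambda}\otimes t^\lambda\subseteq\mathcal A\otimes k[t_1^{\pm1},\dots,t_n^{\pm1}]$, $\mathbb Z^n$-graded. Two $\mathbb Z^n$-graded algebras $\mathcal B,\mathcal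 B'$ are support-isomorphic if there exist an algebra isomorphism $\psi:\mathcal B\to\mathcal B'$ and a group isomorphism $\psi_{\mathrm{su}}$ from the subgroup generated by $\{\lambda:\mathcal B^\lambda\ne0\}$ onto the subgroup generated by $\{\lambda:\mathcal B'^\lambda\ne0\}$ with $\psi(\mathcal B^\lambda)=\mathcal B'^{\psi_{\mathrm{su}}(\lambda)}$ for all $\lambda$ in the former subgroup. *)

From HB Require Import structures.
From mathcomp Require Import all_boot all_order all_algebra.
From mathcomp Require Import finmap.
From mathcomp.multinomials Require Import monalg.
Set Implicit Arguments. Unset Strict Implicit. Unset Printing Implicit Defensive.
Import Order.TTheory GRing.Theory Num.Theory.
Local Open Scope ring_scope.

(* Lattice Z^n, realised as integer row vectors; coordinate i of l is l ord0 i. *)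
Notation Zn n := ('rV[int]_n).

Definition roots_system (k : fieldType) (zeta : nat -> k) : Prop :=
  (forall N, (0 < N)%N -> N.-primitive_root (zeta N)) /\
  (forall a b, (0 < a)%N -> (0 < b)%N -> zeta (a * b)%N ^+ a = zeta b).

(* A (not necessarily associative or unital) k-algebra: a k-vector space A
   with a bilinear product mulA. *)
Definition bilinear_mul (k : fieldType) (A : lmodType k) (mulA : A -> A -> A) :=
  (forall a, linear (mulA a)) /\ (forall b, linear (fun a => mulA a b)).

Definition is_alg_aut (k : fieldType) (A : lmodType k) (mulA : A -> A -> A)
  (s : A -> A) :=
  [/\ linear s, bijective s & forall x y, s (mulA x y) = mulA (s x) (s y)].

Definition aut_cfo (k : fieldType) (A : lmodType k) (mulA : A -> A -> A) (n : nat)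
  (sigma : 'I_n -> A -> A) :=
  [/\ forall i, is_alg_aut mulA (sigma i),
      forall i j x, sigma i (sigma j x) = sigma j (sigma i x)
    & forall i, exists2 r, (0 < r)%N & forall x, iter r (sigma i) x = x].

Definition pow_id (k : fieldType) (A : lmodType k) (n : nat)
  (sigma : 'I_n -> A -> A) (m : 'I_n -> nat) :=
  forall i x, iter (m i) (sigma i) x = x.

Definition is_ord (k : fieldType) (A : lmodType k) (n : nat)
  (sigma : 'I_n -> A -> A) (o : 'I_n -> nat) :=
  forall i, [/\ (0 < o i)%N, forall x, iter (o i) (sigma i) x = x
    & forall r, (0 < r < o i)%N -> exists x, iter r (sigma i) x != x].

Definition eig (k : fieldType) (zeta : nat -> k) (A : lmodType k) (n : nat)
  (sigma : 'I_n -> A -> A) (m : 'I_n -> nat) (l : Zn n) (u : A) :=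
  forall i, sigma i u = (zeta (m i) ^ (l ord0 i)) *: u.

(* The ambient algebra A (x) k[t_1^{+-1},...,t_n^{+-1}], realised as finitely
   supported functions Z^n -> A ({malg A[Zn n]}); f = sum_l f@_l (x) t^l. *)
Definition mscale (k : fieldType) (A : lmodType k) (n : nat) (c : k)
  (f : {malg A[Zn n]}) : {malg A[Zn n]} :=
  \sum_(l <- msupp f) mkmalgU l (c *: f@_l).

(* (a (x) t^mu)(b (x) t^nu) = ab (x) t^(mu+nu), extended bilinearly. *)
Definition mmul (k : fieldType) (A : lmodType k) (mulA : A -> A -> A) (n : nat)
  (f g : {malg A[Zn n]}) : {malg A[Zn n]} :=
  \sum_(mu <- msupp f) \sum_(nu <- msupp g) mkmalgU (mu + nu) (mulA f@_mu g@_nu).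

(* Membership in M_m(A, sigma) = (+)_l A^{\bar l} (x) t^l. *)
Definition in_loop (k : fieldType) (zeta : nat -> k) (A : lmodType k) (n : nat)
  (sigma : 'I_n -> A -> A) (m : 'I_n -> nat) (f : {malg A[Zn n]}) :=
  forall l, eig zeta sigma m l f@_l.

Definition in_comp (k : fieldType) (zeta : nat -> k) (A : lmodType k) (n : nat)
  (sigma : 'I_n -> A -> A) (m : 'I_n -> nat) (l : Zn n) (f : {malg A[Zn n]}) :=
  eig zeta sigma m l f@_l /\ forall mu, mu != l -> f@_mu = 0.

Definition gen_subgroup (n : nat) (S : Zn n -> Prop) (x : Zn n) : Prop :=
  forall P : Zn n -> Prop, P 0 -> (forall a b, P a -> P b -> P (a - b)) ->
    (forall a, S a -> P a) -> P x.

(* Support-isomorphism between two Z^n-graded subalgebras B, B' of the ambient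
   algebra, given by their carriers and their homogeneous components. *)
Definition support_iso (k : fieldType) (A : lmodType k) (mulA : A -> A -> A)
  (n : nat) (inB inB' : {malg A[Zn n]} -> Prop)
  (compB compB' : Zn n -> {malg A[Zn n]} -> Prop) : Prop :=
  let supp (C : Zn n -> {malg A[Zn n]} -> Prop) :=
    fun l => exists2 f, C l f & f != 0 in
  let G := gen_subgroup (supp compB) in
  let G' := gen_subgroup (supp compB') in
  exists (psi : {malg A[Zn n]} -> {malg A[Zn n]}) (psu : Zn n -> Zn n),
    (
     (forall f, inB f -> inB' (psi f)) /\
     (forall c f g, inB f -> inB g ->
        psi (mscale c f + g) = mscale c (psi f) + psi g) /\
     (forall f g, inB f -> inB g -> psi (mmul mulA f g) = mmul mulA (psi f) (psi g)) /\
     (forall f g, inB f -> inB g -> psi f = psi g -> f = g) /\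
     (forall f', inB' f' -> exists2 f, inB f & psi f = f')) /\
    (
     (forall a b, G a -> G b -> psu (a + b) = psu a + psu b) /\
     (forall a, G a -> G' (psu a)) /\
     (forall a b, G a -> G b -> psu a = psu b -> a = b) /\
     (forall b, G' b -> exists2 a, G a & psu a = b)) /\
    (
     forall l, G l -> forall f',
       compB' (psu l) f' <-> exists2 f, compB l f & psi f = f').

From Pilot Require Import Defs.
From HB Require Import structures.
From mathcomp Require Import all_boot all_order all_algebra.
From mathcomp Require Import finmap.
From mathcomp.multinomials Require Import monalg.
Import GRing.Theory.
Set Implicit Arguments. Unset Strict Implicit. Unset Printing Implicit Defensive.
Local Open Scope ring_scope.

(* Since sigma_i^(m_i) = id, ord(sigma_i) divides m_i; put d_i = m_i / ord(sigma_i).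
   If u <> 0 and sigma_i u = zeta_(m_i)^(l_i) u, then applying sigma_i ord(sigma_i)
   times gives zeta_(m_i)^(l_i ord(sigma_i)) = 1, hence d_i | l_i: the support of
   M_m(A, sigma) lies in the sublattice d Z^n.  There, zeta_(m_i)^(d_i y_i) =
   zeta_(ord(sigma_i))^(y_i), so the m-eigenspace of degree d y is the
   ord(sigma)-eigenspace of degree y.  Therefore reindexing t^(d y) |-> t^y is an
   algebra isomorphism M_m(A, sigma) -> M_ord(sigma)(A, sigma) sending the
   component of degree d y onto the component of degree y, with support
   isomorphism y |-> y / d. *)

Section MalgReindex.
Variables (K K' : choiceType) (G : zmodType).
Implicit Types (h : K -> K') (f g : {malg G[K]}).
Local Open Scope fset_scope.

Definition malg_reindex h f : {malg G[K']} := \sum_(k <- msupp f) << f@_k *g h k >>.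

Lemma malg_reindexEw h f (D : {fset K}) : msupp f `<=` D ->
  malg_reindex h f = \sum_(k <- D) << f@_k *g h k >>.
Proof.
move=> le_fD; apply: big_fset_incl => // k _ /mcoeff_outdom ->.
exact: monalgU0.
Qed.

Lemma malg_reindex_is_zmod_morphism h : zmod_morphism (malg_reindex h).
Proof.
move=> f g; set D := msupp f `|` msupp g.
rewrite !(malg_reindexEw _ (D := D)) ?fsubsetUl ?fsubsetUr ?msuppB_le //.
by rewrite -sumrB; apply: eq_bigr => k _; rewrite mcoeffB monalgUB.
Qed.

HB.instance Definition _ h := GRing.isZmodMorphism.Build {malg G[K]} {malg G[K']}
  (malg_reindex h) (malg_reindex_is_zmod_morphism h).

Lemma malg_reindexU h x k : malg_reindex h << x *g k >> = << x *g h k >>.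
Proof.
by rewrite (malg_reindexEw _ (D := [fset k])) ?msuppU_le // big_seq_fset1 mcoeffUU.
Qed.

Lemma malg_reindex_sumU h (I : Type) (s : seq I) (a : I -> G) (e : I -> K) :
  malg_reindex h (\sum_(i <- s) << a i *g e i >>) =
  \sum_(i <- s) << a i *g h (e i) >>.
Proof. by rewrite raddf_sum; apply: eq_bigr => i _; exact: malg_reindexU. Qed.

Lemma eq_in_malg_reindex h1 h2 f : {in msupp f, h1 =1 h2} ->
  malg_reindex h1 f = malg_reindex h2 f.
Proof. by move=> eq_h; rewrite /malg_reindex; apply: eq_big_seq => k /eq_h ->. Qed.

Lemma mcoeff_reindex h f y :
  (malg_reindex h f)@_y = \sum_(k <- msupp f | h k == y) f@_k.
Proof.
rewrite /malg_reindex raddf_sum [RHS]big_mkcond /=; apply: eq_bigr => k _.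
by rewrite mcoeffU; case: eqP.
Qed.

Lemma mcoeff_reindex_in h f k : {in msupp f &, injective h} ->
  k \in msupp f -> (malg_reindex h f)@_(h k) = f@_k.
Proof.
move=> h_inj kf; rewrite mcoeff_reindex big_mkcond (bigD1_seq k) ?fset_uniq //=.
rewrite eqxx big1_seq ?addr0 // => k' /andP[nk' k'f]; case: eqP => // eq_h.
by case/eqP: nk'; apply: h_inj.
Qed.

Lemma mcoeff_reindex_out h f y : (forall k, k \in msupp f -> h k != y) ->
  (malg_reindex h f)@_y = 0.
Proof.
move=> hy; rewrite mcoeff_reindex big1_seq // => k /andP[/eqP hk /hy].
by rewrite hk eqxx.
Qed.

Lemma mcoeff_reindex_inj h f k : injective h ->
  (malg_reindex h f)@_(h k) = f@_k.
Proof.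
move=> h_inj; have [kf|kf] := boolP (k \in msupp f).
  exact: mcoeff_reindex_in (in2W h_inj) kf.
rewrite (mcoeff_outdom kf) mcoeff_reindex_out // => k' k'f.
by rewrite (inj_eq h_inj); apply: contraNneq kf => <-.
Qed.

Lemma msupp_reindex h f : msupp (malg_reindex h f) `<=` [fset h k | k in msupp f].
Proof.
apply/fsubsetP => y; apply: contraTT => y_out; rewrite -mcoeff_eq0.
apply/eqP/mcoeff_reindex_out => k kf; apply: contra y_out => /eqP <-.
exact: in_imfset.
Qed.

End MalgReindex.

Lemma malg_reindex_comp (K1 K2 K3 : choiceType) (G : zmodType)
  (h1 : K1 -> K2) (h2 : K2 -> K3) (f : {malg G[K1]}) :
  malg_reindex h2 (malg_reindex h1 f) = malg_reindex (h2 \o h1) f.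
Proof. exact: malg_reindex_sumU. Qed.

Lemma malg_reindex_id (K : choiceType) (G : zmodType) (f : {malg G[K]}) :
  malg_reindex id f = f.
Proof. by rewrite [RHS]monalgE. Qed.

Section LoopProduct.
Variables (k : fieldType) (A : lmodType k) (mulA : A -> A -> A) (n : nat).
Implicit Types (f g : {malg A[Zn n]}) (h : Zn n -> Zn n).
Local Open Scope fset_scope.

Lemma mcoeff_mscale c f x : (mscale c f)@_x = c *: f@_x.
Proof.
rewrite /mscale raddf_sum [in RHS](monalgE f) raddf_sum scaler_sumr.
by apply: eq_bigr => l _; rewrite /= !mcoeffU scalerMnr.
Qed.

Lemma malg_reindex_mscale h c f :
  malg_reindex h (mscale c f) = mscale c (malg_reindex h f).
Proof.
apply/malgP => y; rewrite mcoeff_mscale /mscale malg_reindex_sumU raddf_sum.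
rewrite mcoeff_reindex scaler_sumr [RHS]big_mkcond; apply: eq_bigr => l _ /=.
by rewrite mcoeffU; case: eqP; rewrite ?scaler0.
Qed.

Hypotheses (mul0A : forall b, mulA 0 b = 0) (mulA0 : forall a, mulA a 0 = 0).

Lemma mmulEw (D1 D2 : {fset Zn n}) f g :
  msupp f `<=` D1 -> msupp g `<=` D2 ->
  Defs.mmul mulA f g =
    \sum_(mu <- D1) \sum_(nu <- D2) << mulA f@_mu g@_nu *g mu + nu >>.
Proof.
move=> le_f le_g; rewrite /Defs.mmul (big_fset_incl _ le_f); last first.
  by move=> mu _ /mcoeff_outdom ->; rewrite big1 // => nu _; rewrite mul0A monalgU0.
apply: eq_bigr => mu _; apply: big_fset_incl => // nu _ /mcoeff_outdom ->.
by rewrite mulA0 monalgU0.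
Qed.

Lemma malg_reindex_mmul h f g :
  {in msupp f &, injective h} -> {in msupp g &, injective h} ->
  {in msupp f & msupp g, {morph h : a b / (a + b)%R}} ->
  malg_reindex h (Defs.mmul mulA f g) =
    Defs.mmul mulA (malg_reindex h f) (malg_reindex h g).
Proof.
move=> inj_f inj_g hD.
rewrite (mmulEw (msupp_reindex h f) (msupp_reindex h g)) !big_imfset //=.
rewrite /Defs.mmul raddf_sum; apply: eq_big_seq => mu muf.
rewrite /= malg_reindex_sumU big_imfset //=; apply: eq_big_seq => nu nug.
by rewrite !mcoeff_reindex_in // hD.
Qed.

End LoopProduct.

Section GenSubgroup.
Variables (n : nat) (S : Zn n -> Prop).

Lemma gen_subgroup0 : gen_subgroup S 0.
Proof. by move=> P. Qed.

Lemma gen_subgroupB a b :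
  gen_subgroup S a -> gen_subgroup S b -> gen_subgroup S (a - b).
Proof. by move=> Ga Gb P P0 PB PS; exact: PB (Ga P P0 PB PS) (Gb P P0 PB PS). Qed.

Lemma gen_subgroup_gen a : S a -> gen_subgroup S a.
Proof. by move=> Sa P _ _; apply. Qed.

End GenSubgroup.

Lemma gen_subgroup_morph n (S S' D : Zn n -> Prop) (h : Zn n -> Zn n) a :
  D 0 -> (forall x y, D x -> D y -> D (x - y)) -> (forall x, S x -> D x) ->
  (forall x y, D x -> D y -> h (x - y) = h x - h y) ->
  (forall x, S x -> S' (h x)) ->
  gen_subgroup S a -> gen_subgroup S' (h a).
Proof.
move=> D0 DB SD hB hS Ga.
have h0 : h 0 = 0 by have := hB 0 0 D0 D0; rewrite !subrr.
suff [] : D a /\ gen_subgroup S' (h a) by [].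
apply: (Ga (fun x => D x /\ gen_subgroup S' (h x))) => [|x y [Dx Gx] [Dy Gy] | x Sx].
- by rewrite h0; split=> //; exact: gen_subgroup0.
- by rewrite hB //; split; [exact: DB | exact (gen_subgroupB Gx Gy)].
- by split; [exact: SD | exact (gen_subgroup_gen (hS x Sx))].
Qed.

Section Dilation.
Variables (n : nat) (d : 'I_n -> nat).
Hypothesis d_gt0 : forall i, (0 < d i)%N.

Definition stretch (y : Zn n) : Zn n := \row_i (y ord0 i * (d i)%:Z).
(* Floor division: [shrink] inverts [stretch] only on [dvd_row]. *)
Definition shrink (l : Zn n) : Zn n := \row_i (l ord0 i %/ (d i)%:Z)%Z.
Definition dvd_row (l : Zn n) : bool := [forall i, ((d i)%:Z %| l ord0 i)%Z].

Lemma stretch_is_zmod_morphism : zmod_morphism stretch.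
Proof. by move=> a b; apply/rowP => i; rewrite !mxE mulrBl. Qed.

HB.instance Definition _ := GRing.isZmodMorphism.Build (Zn n) (Zn n) stretch
  stretch_is_zmod_morphism.

Lemma shrinkK : cancel stretch shrink.
Proof.
by move=> y; apply/rowP => i; rewrite !mxE mulzK // eqz_nat -lt0n d_gt0.
Qed.

Lemma stretch_inj : injective stretch.
Proof. exact: can_inj shrinkK. Qed.

Lemma dvd_row_stretch y : dvd_row (stretch y).
Proof. by apply/forallP => i; rewrite mxE dvdz_mull. Qed.

Lemma stretchK l : dvd_row l -> stretch (shrink l) = l.
Proof. by move=> /forallP dvd_l; apply/rowP => i; rewrite !mxE divzK. Qed.

Lemma dvd_rowP l : reflect (exists y, l = stretch y) (dvd_row l).
Proof.
apply: (iffP idP) => [/stretchK <-|[y ->]]; last exact: dvd_row_stretch.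
by exists (shrink l).
Qed.

Lemma dvd_row0 : dvd_row 0.
Proof. by rewrite -(raddf0 stretch) dvd_row_stretch. Qed.

Lemma dvd_rowB a b : dvd_row a -> dvd_row b -> dvd_row (a - b).
Proof. by move=> /dvd_rowP[y ->] /dvd_rowP[z ->]; rewrite -raddfB dvd_row_stretch. Qed.

Lemma shrink_inj_in : {in dvd_row &, injective shrink}.
Proof. by move=> a b Da Db eq_ab; rewrite -(stretchK Da) eq_ab stretchK. Qed.

Lemma shrinkB a b : dvd_row a -> dvd_row b -> shrink (a - b) = shrink a - shrink b.
Proof. by move=> /dvd_rowP[y ->] /dvd_rowP[z ->]; rewrite -raddfB !shrinkK. Qed.

Lemma shrinkD a b : dvd_row a -> dvd_row b -> shrink (a + b) = shrink a + shrink b.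
Proof. by move=> /dvd_rowP[y ->] /dvd_rowP[z ->]; rewrite -raddfD !shrinkK. Qed.

End Dilation.

Lemma iter_period_dvd (T : Type) (f : T -> T) (m o : nat) : (0 < o)%N ->
  (forall x, iter o f x = x) ->
  (forall r, (0 < r < o)%N -> exists x, iter r f x <> x) ->
  (forall x, iter m f x = x) -> (o %| m)%N.
Proof.
move=> o_gt0 f_o o_min f_m.
have iter_o q x : iter (q * o) f x = x.
  by elim: q => // q IHq; rewrite mulSn iterD IHq f_o.
rewrite /dvdn; apply/negPn/negP; rewrite -lt0n => r_gt0.
have /o_min[x] : (0 < m %% o < o)%N by rewrite r_gt0 ltn_pmod.
by rewrite -[x in iter _ _ x](iter_o (m %/ o)%N) -iterD addnC -divn_eq f_m.
Qed.

Lemma prim_order_dvdz (k : fieldType) (z : k) (N : nat) (e : int) :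
  N.-primitive_root z -> (N%:Z %| e)%Z = (z ^ e == 1).
Proof.
by move=> prim_z; case: e => p; rewrite dvdzE /= ?invr_eq1 -(prim_order_dvd prim_z).
Qed.

Lemma roots_system_exprz (k : fieldType) (zeta : nat -> k) (a b : nat) (y : int) :
  roots_system zeta -> (0 < a)%N -> (0 < b)%N ->
  zeta (a * b)%N ^ (y * a%:Z) = zeta b ^ y.
Proof. by move=> [_ zeta_pow] a0 b0; rewrite mulrC -exprz_exp -exprnP zeta_pow. Qed.

Section Eigenspaces.
Variables (k : fieldType) (zeta : nat -> k) (A : lmodType k) (n : nat).
Variable sigma : 'I_n -> A -> A.

Lemma linear_fun0 (s : A -> A) : linear s -> s 0 = 0.
Proof.
move=> s_lin; have /eqP := s_lin 1 0 0; rewrite !scale1r addr0 -subr_eq subrr.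
by rewrite eq_sym => /eqP.
Qed.

Lemma linear_funZ (s : A -> A) c u : linear s -> s (c *: u) = c *: s u.
Proof. by move=> s_lin; rewrite -[c *: u]addr0 s_lin linear_fun0 // addr0. Qed.

Lemma iter_eigen (s : A -> A) c u r :
  linear s -> s u = c *: u -> iter r s u = c ^+ r *: u.
Proof.
move=> s_lin su; elim: r => [|r IHr] /=; first by rewrite scale1r.
by rewrite IHr linear_funZ // su scalerA exprSr.
Qed.

Lemma eig0 m l : (forall i, linear (sigma i)) -> eig zeta sigma m l 0.
Proof. by move=> sigma_lin i; rewrite linear_fun0 // scaler0. Qed.

Lemma in_compE m l f :
  in_comp zeta sigma m l f <-> exists2 u, eig zeta sigma m l u & f = << u *g l >>.
Proof.
split=> [[eig_l f_out] | [u eig_u ->]].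
  exists f@_l => //; apply/malgP => x; rewrite mcoeffU.
  have [<-|lx] := eqVneq l x; first by rewrite mulr1n.
  by rewrite mulr0n f_out // eq_sym.
by split=> [|mu /negbTE mu_l]; rewrite mcoeffU ?eqxx ?(eq_sym l) ?mu_l.
Qed.

Definition comp_support m l := exists2 f, in_comp zeta sigma m l f & f != 0.

Lemma comp_supportE m l :
  comp_support m l <-> exists2 u, eig zeta sigma m l u & u != 0.
Proof.
split=> [[f /in_compE[u eig_u ->]] | [u eig_u u0]].
  by rewrite monalgU_eq0; exists u.
by exists << u *g l >>; [apply/in_compE; exists u | rewrite monalgU_eq0].
Qed.

End Eigenspaces.

Section LoopAlgebra.
Variables (k : fieldType) (zeta : nat -> k) (A : lmodType k) (mulA : A -> A -> A).
Variables (n : nat) (sigma : 'I_n -> A -> A) (m o : 'I_n -> nat).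
Hypotheses (zetaP : roots_system zeta) (mulA_bilin : bilinear_mul mulA).
Hypothesis sigma_lin : forall i, linear (sigma i).
Hypotheses (o_gt0 : forall i, (0 < o i)%N) (m_gt0 : forall i, (0 < m i)%N).
Hypothesis sigma_o : forall i x, iter (o i) (sigma i) x = x.
Hypothesis o_dvd_m : forall i, (o i %| m i)%N.

Let d i := (m i %/ o i)%N.

Let m_eq_d_o i : m i = (d i * o i)%N.
Proof. by rewrite divnK. Qed.

Let d_gt0 i : (0 < d i)%N.
Proof. by have := m_gt0 i; rewrite m_eq_d_o muln_gt0 => /andP[]. Qed.

Lemma eig_stretch y u : eig zeta sigma m (stretch d y) u <-> eig zeta sigma o y u.
Proof.
have zeta_d i : zeta (m i) ^ (y ord0 i * (d i)%:Z) = zeta (o i) ^ (y ord0 i).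
  by rewrite m_eq_d_o roots_system_exprz ?d_gt0.
by split=> eig_u i; have := eig_u i; rewrite mxE zeta_d.
Qed.

Lemma eig_dvd_row l u : u != 0 -> eig zeta sigma m l u -> dvd_row d l.
Proof.
move=> u0 eig_u; apply/forallP => i.
have prim_zeta : (m i).-primitive_root (zeta (m i)) by case: zetaP => ->.
have := iter_eigen (o i) (sigma_lin i) (eig_u i); rewrite sigma_o.
move/eqP; rewrite eq_sym -subr_eq0 -{2}[u]scale1r -scalerBl scaler_eq0 (negbTE u0) orbF.
rewrite subr_eq0 exprnP exprz_exp -(prim_order_dvdz _ prim_zeta).
by rewrite m_eq_d_o PoszM dvdz_mul2r // eqz_nat -lt0n.
Qed.

Implicit Types f g : {malg A[Zn n]}.

Local Notation psi := (malg_reindex (shrink d)).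
Local Notation phi := (malg_reindex (stretch d)).

Lemma in_loop_dvd_row f :
  in_loop zeta sigma m f -> {subset msupp f <= dvd_row d}.
Proof.
by move=> f_loop l; rewrite -mcoeff_neq0 => fl; exact: eig_dvd_row fl (f_loop l).
Qed.

Lemma in_loop_shrinkK f : in_loop zeta sigma m f -> phi (psi f) = f.
Proof.
move=> f_loop; rewrite malg_reindex_comp -[RHS]malg_reindex_id.
apply: eq_in_malg_reindex => l /(in_loop_dvd_row f_loop) Dl.
exact (stretchK Dl).
Qed.

Lemma shrink_stretchK g : psi (phi g) = g.
Proof.
rewrite malg_reindex_comp -[RHS]malg_reindex_id.
by apply: eq_in_malg_reindex => y _; exact (shrinkK d_gt0 y).
Qed.

Lemma in_loop_stretch g : in_loop zeta sigma m (phi g) <-> in_loop zeta sigma o g.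
Proof.
have phiE y : (phi g)@_(stretch d y) = g@_y.
  exact/mcoeff_reindex_inj/stretch_inj/d_gt0.
split=> g_loop x.
  by have := g_loop (stretch d x); rewrite phiE => /eig_stretch.
have [/dvd_rowP[y ->]|x_out] := boolP (dvd_row d x).
  by rewrite phiE; apply/eig_stretch.
rewrite mcoeff_reindex_out; first exact: eig0.
by move=> y _; apply: contraNneq x_out => <-; exact: dvd_row_stretch.
Qed.

Lemma in_loop_shrink f : in_loop zeta sigma m f -> in_loop zeta sigma o (psi f).
Proof. by move=> f_loop; apply: (in_loop_stretch _).1; rewrite in_loop_shrinkK. Qed.

Lemma shrink_mscaleD c f g : psi (mscale c f + g) = mscale c (psi f) + psi g.
Proof. by rewrite raddfD /= malg_reindex_mscale. Qed.

Lemma shrink_mmul f g : in_loop zeta sigma m f -> in_loop zeta sigma m g ->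
  psi (Defs.mmul mulA f g) = Defs.mmul mulA (psi f) (psi g).
Proof.
move=> /in_loop_dvd_row supp_f /in_loop_dvd_row supp_g.
have [mulA_l mulA_r] := mulA_bilin.
apply: malg_reindex_mmul.
- by move=> b; exact: linear_fun0 (mulA_r b).
- by move=> a; exact: linear_fun0 (mulA_l a).
- by move=> a b /supp_f Da /supp_f Db; exact: shrink_inj_in.
- by move=> a b /supp_g Da /supp_g Db; exact: shrink_inj_in.
- by move=> a b /supp_f Da /supp_g Db; exact: (shrinkD d_gt0).
Qed.

Lemma comp_support_stretch y :
  comp_support zeta sigma m (stretch d y) <-> comp_support zeta sigma o y.
Proof.
split=> /comp_supportE[u eig_u u0]; apply/comp_supportE.
  by exists u => //; apply/eig_stretch.
by exists u => //; apply/eig_stretch.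
Qed.

Lemma comp_support_dvd_row l : comp_support zeta sigma m l -> dvd_row d l.
Proof. by case/comp_supportE => u eig_u u0; exact: eig_dvd_row u0 eig_u. Qed.

Local Notation G := (gen_subgroup (comp_support zeta sigma m)).
Local Notation G' := (gen_subgroup (comp_support zeta sigma o)).

Lemma gen_support_dvd_row l : G l -> dvd_row d l.
Proof.
move=> Gl; apply: (Gl (fun x => dvd_row d x)).
- exact: dvd_row0.
- exact: dvd_rowB.
- exact: comp_support_dvd_row.
Qed.

Lemma gen_support_shrink a : G a -> G' (shrink d a).
Proof.
apply: (gen_subgroup_morph (D := fun x => dvd_row d x)).
- exact: dvd_row0.
- exact: dvd_rowB.
- exact: comp_support_dvd_row.
- exact: (shrinkB d_gt0).
- move=> x /[dup] /comp_support_dvd_row /dvd_rowP[y ->].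
  by rewrite (shrinkK d_gt0) => /comp_support_stretch.
Qed.

Lemma gen_support_stretch b : G' b -> G (stretch d b).
Proof.
apply: (gen_subgroup_morph (D := fun _ => True)) => // [x y _ _|x].
  exact: raddfB.
by move/comp_support_stretch.
Qed.

Lemma in_comp_shrink l f' : dvd_row d l ->
  in_comp zeta sigma o (shrink d l) f' <->
  exists2 f, in_comp zeta sigma m l f & psi f = f'.
Proof.
move=> Dl; split=> [/in_compE[u eig_u ->] | [f /in_compE[u eig_u ->] <-]].
  exists << u *g l >>; last exact: malg_reindexU.
  by apply/in_compE; exists u => //; rewrite -(stretchK Dl); apply/eig_stretch.
rewrite malg_reindexU; apply/in_compE; exists u => //.
by apply/eig_stretch; rewrite stretchK.
Qed.

Lemma support_iso_loop :
  support_iso mulA (in_loop zeta sigma m) (in_loop zeta sigma o)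
    (in_comp zeta sigma m) (in_comp zeta sigma o).
Proof.
exists psi, (shrink d); split; last split.
- split; [|split; [|split; [|split]]].
  + exact: in_loop_shrink.
  + by move=> c f g _ _; exact: shrink_mscaleD.
  + exact: shrink_mmul.
  + by move=> f g f_loop g_loop /(congr1 phi); rewrite !in_loop_shrinkK.
  + move=> f' f'_loop; exists (phi f'); last exact: shrink_stretchK.
    exact: (in_loop_stretch _).2.
- split; [|split; [|split]].
  + move=> a b /gen_support_dvd_row Da /gen_support_dvd_row Db.
    exact: (shrinkD d_gt0).
  + exact: gen_support_shrink.
  + move=> a b /gen_support_dvd_row Da /gen_support_dvd_row Db.
    exact: shrink_inj_in.
  + move=> b /gen_support_stretch Gb.
    by exists (stretch d b); rewrite ?(shrinkK d_gt0).
- by move=> l /gen_support_dvd_row Dl f'; exact: in_comp_shrink.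
Qed.

End LoopAlgebra.

Unset Implicit Arguments.

Theorem lemma2p2p4 (k : closedFieldType) (zeta : nat -> k)
  (A : lmodType k) (mulA : A -> A -> A) (n : nat)
  (sigma : 'I_n -> A -> A) (m o : 'I_n -> nat) :
  [pchar k] =i pred0 ->
  roots_system zeta ->
  bilinear_mul mulA ->
  aut_cfo mulA sigma ->
  (forall i, (0 < m i)%N) ->
  pow_id sigma m ->
  is_ord sigma o ->
  support_iso mulA (in_loop zeta sigma m) (in_loop zeta sigma o)
    (in_comp zeta sigma m) (in_comp zeta sigma o).
Proof.
move=> _ zetaP mulA_bilin [sigma_aut _ _] m_gt0 sigma_m o_ord.
have sigma_lin i : linear (sigma i) by case: (sigma_aut i).
have o_gt0 i : (0 < o i)%N by case: (o_ord i).
have sigma_o i x : iter (o i) (sigma i) x = x by case: (o_ord i) => _ ->.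
have o_dvd_m i : (o i %| m i)%N.
  have [o_gt0' _ o_min] := o_ord i.
  apply: iter_period_dvd o_gt0' (sigma_o i) _ (sigma_m i).
  by move=> r /o_min[x /eqP]; exists x.
exact: support_iso_loop.
Qed.
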